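(* Let $\mathcal{O}$ be a $\Bbbk$-linear cyclic operad with multiplication and consider the associated cocyclic module with cochain complex $\mathcal{C}^*(\mathcal{O})$. Then the cyclic cochains $\mathcal{C}^n_\lambda(\mathcal{O})=\{f\in\mathcal{O}(n):\tau_nf=(-1)^nf\}$ form a subcomplex $\mathcal{C}^*_\lambda(\mathcal{O})$ of $\mathcal{C}^*(\mathcal{O})$ which is stable under the Lie bracket of degree $-1$. In particular, the cyclic cohomology $HC^*_\lambda(\mathcal{C}^*(\mathcal{O}))$ (the cohomology of $\mathcal{C}^*_\lambda(\mathcal{O})$) has naturally a structure of graded Lie algebra of degree $-1$.
   Context: $\Bbbk$ is a commutative ring. A non-symmetric operad $\mathcal{O}$ has modules $\mathcal{O}(n)$, an identity $id\in\mathcal{O}(1)$ and associative unital partial compositions $\circ_i:\mathcal{O}(m)\otimes\mathcal{O}(n)\to\mathcal{O}(m+n-1)$. It is cyclic if equipped with linear maps $\tau_n:\mathcal{O}(n)\to\mathcal{O}(n)$ with $\tau_n^{n+1}=id$, $\tau_{m+n-1}(f\circ_1g)=\tau_ng\circ_n\tau_mf$ for $m,n\ge1$, and $\tau_{m+n-1}(f\circ_ig)=\tau_mf\circ_{i-1}g$ for $m\ge2$, $n\ge0$, $2\le i\le m$. A cyclic operad with multiplication is a cyclic operad with $\mu\in\mathcal{O}(2)$, $e\in\mathcal{O}(0)$ such that $\mu\circ_1\mu=\mu\circ_2\mu$, $\mu\circ_1e=id=\mu\circ_2e$ and $\tau_2\mu=\mu$. The cochain complex $\mathcal{C}^*(\mathcal{O})$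 has $\mathcal{O}(n)$ in degree $n$ and differential $df=\mu\circ_2f+\sum_{i=1}^n(-1)^if\circ_i\mu+(-1)^{n+1}\mu\circ_1f$ (cofaces $\delta_0f=\mu\circ_2f$, $\delta_if=f\circ_i\mu$, $\delta_{n+1}f=\mu\circ_1f$, codegeneracies $\sigma_{i-1}f=f\circ_ie$, cyclic operators $\tau_n$). The Lie bracket of degree $-1$ on $\mathcal{C}^*(\mathcal{O})$ is $\{f,g\}=f\bar\circ g-(-1)^{(m-1)(n-1)}g\bar\circ f$ with $f\bar\circ g=(-1)^{(m-1)(n-1)}\sum_{i=1}^m(-1)^{(n-1)(i-1)}f\circ_ig$ for $f\in\mathcal{O}(m)$, $g\in\mathcal{O}(n)$. *)

From HB Require Import structures.
From mathcomp Require Import all_boot all_order all_algebra.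
Set Implicit Arguments. Unset Strict Implicit. Unset Printing Implicit Defensive.
Import Order.TTheory GRing.Theory Num.Theory.
Local Open Scope ring_scope.

Definition castO (O : nat -> Type) (m n : nat) (e : m = n) (x : O m) : O n :=
  eq_rect m O x n e.

(* A k-linear non-symmetric cyclic operad with multiplication.
   op n = O(n); comp m n i f g = f o_i g in O(m+n-1) (meaningful for 1<=i<=m);
   tau n = tau_n; mu in O(2), e in O(0). *)
Record CycOpMult (R : comPzRingType) := {
  op : nat -> lmodType R;
  oid : op 1;
  comp : forall m n : nat, nat -> op m -> op n -> op (m + n - 1);
  tau : forall n : nat, op n -> op n;
  mu : op 2;
  unit0 : op 0;
  comp_linl : forall m n i (a : R) (f f' : op m) (g : op n),
    comp i (a *: f + f') g = a *: comp i f g + comp i f' g;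
  comp_linr : forall m n i (a : R) (f : op m) (g g' : op n),
    comp i f (a *: g + g') = a *: comp i f g + comp i f g';
  tau_lin : forall n (a : R) (f f' : op n),
    tau (a *: f + f') = a *: tau f + tau f';
  comp_assoc_seq : forall m n p i j (f : op m) (g : op n) (h : op p)
    (eq : ((m + n - 1) + p - 1 = m + (n + p - 1) - 1)%N),
    (1 <= i <= m)%N -> (1 <= j <= n)%N ->
    @castO (fun k => op k) _ _ eq (comp (i + j - 1)%N (comp i f g) h) = comp i f (comp j g h);
  comp_assoc_par : forall m n p i j (f : op m) (g : op n) (h : op p)
    (eq : ((m + n - 1) + p - 1 = (m + p - 1) + n - 1)%N),
    (1 <= i)%N -> (i < j)%N -> (j <= m)%N ->
    @castO (fun k => op k) _ _ eq (comp (j + n - 1)%N (comp i f g) h) = comp i (comp j f h) g;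
  comp_unitl : forall n (f : op n) (eq : (1 + n - 1 = n)%N),
    @castO (fun k => op k) _ _ eq (comp 1 oid f) = f;
  comp_unitr : forall m i (f : op m) (eq : (m + 1 - 1 = m)%N),
    (1 <= i <= m)%N -> @castO (fun k => op k) _ _ eq (comp i f oid) = f;
  tau_period : forall n (f : op n), iter n.+1 (fun x : op n => tau x) f = f;
  tau_comp1 : forall m n (f : op m) (g : op n) (eq : (n + m - 1 = m + n - 1)%N),
    (1 <= m)%N -> (1 <= n)%N ->
    tau (comp 1 f g) = @castO (fun k => op k) _ _ eq (comp n (tau g) (tau f));
  tau_compi : forall m n i (f : op m) (g : op n),
    (2 <= m)%N -> (2 <= i <= m)%N ->
    tau (comp i f g) = comp (i - 1)%N (tau f) g;
  mu_assoc : comp 1 mu mu = comp 2 mu mu;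
  mu_unit1 : forall eq : (2 + 0 - 1 = 1)%N, @castO (fun k => op k) _ _ eq (comp 1 mu unit0) = oid;
  mu_unit2 : forall eq : (2 + 0 - 1 = 1)%N, @castO (fun k => op k) _ _ eq (comp 2 mu unit0) = oid;
  tau_mu : tau mu = mu
}.

Arguments op {R} O n : rename.
Arguments oid {R} O : rename.
Arguments comp {R} O {m n} i f g : rename.
Arguments tau {R} O {n} f : rename.
Arguments mu {R} O : rename.
Arguments unit0 {R} O : rename.

Section Complex.
Variables (R : comPzRingType) (O : CycOpMult R).

Lemma arity_d (n : nat) : (n + 2 - 1 = n.+1)%N.
Proof. by rewrite addn2 subn1. Qed.

Lemma arity_swap (m n : nat) : (n + m - 1 = m + n - 1)%N.
Proof. by rewrite addnC. Qed.

Definition dO (n : nat) (f : op O n) : op O n.+1 :=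
  (comp O 2 (mu O) f : op O n.+1)
  + \sum_(1 <= i < n.+1) (-1) ^+ i *: @castO (fun k => op O k) _ _ (arity_d n) (comp O i f (mu O))
  + (-1) ^+ n.+1 *: (comp O 1 (mu O) f : op O n.+1).

Definition sgn2 (a b : nat) : R :=
  (-1) ^+ `|((a%:Z - 1) * (b%:Z - 1))%R|%N.

Definition bcirc (m n : nat) (f : op O m) (g : op O n) : op O (m + n - 1)%N :=
  sgn2 m n *: \sum_(1 <= i < m.+1) sgn2 n i *: comp O i f g.

Definition bracket (m n : nat) (f : op O m) (g : op O n) : op O (m + n - 1)%N :=
  bcirc f g - sgn2 m n *: @castO (fun k => op O k) _ _ (arity_swap m n) (bcirc g f).

Definition is_cyclic (n : nat) (f : op O n) : Prop :=
  tau O f = (-1) ^+ n *: f.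

End Complex.

(* For a cyclic cochain f of arity m the axiom tau (f o_(i+1) g) = tau f o_i g reads
   tau (f o_(i+1) g) = (-1)^m f o_i g, so tau maps the circle product
   f o g = +-sum_i +-f o_i g to (-1)^(m+n-1) (f o g) up to the two boundary terms
   f o_m g and tau (f o_1 g) = +-(g o_n f).  This boundary part is symmetric in f and g,
   so it cancels in {f, g} = f o g -+ g o f.  If g has arity 0 the two boundary terms
   already cancel each other, since then tau (f o_1 g) = f o_m g.  Finally the
   differential is inner, d f = (-1)^n {f, mu}, and mu is cyclic. *)

From HB Require Import structures.
From mathcomp Require Import all_boot all_order all_algebra.
From mathcomp Require Import zify.
Import GRing.Theory.
Local Open Scope ring_scope.

Lemma signr_eq (R : pzRingType) (a b : nat) : odd a = odd b -> (-1) ^+ a = (-1) ^+ b :> R.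
Proof. by move=> eq_ab; rewrite -signr_odd eq_ab signr_odd. Qed.

Lemma sgn2E (R : comPzRingType) (a b : nat) : sgn2 R a b = (-1) ^+ (a.+1 * b.+1).
Proof.
have sign_pred k : (-1) ^+ `|k%:Z - 1|%N = (-1) ^+ k.+1 :> R.
  by case: k => [|k]; rewrite ?subrr //; apply: signr_eq; rewrite /= subSS subn0 negbK.
by rewrite /sgn2 abszM mulnC exprM sign_pred -exprM mulnC exprM sign_pred -exprM.
Qed.

Lemma sgn2C (R : comPzRingType) (a b : nat) : sgn2 R a b = sgn2 R b a.
Proof. by rewrite !sgn2E mulnC. Qed.

Ltac sign_parity :=
  rewrite ?sgn2E -?exprD; apply: signr_eq; rewrite ?(oddD, oddM) /=;
  by repeat match goal with |- context [odd ?k] => case: (odd k) end.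

Section CyclicCochains.
Variables (R : comPzRingType) (O : CycOpMult R).

Local Notation cast e := (@castO (fun k => op O k) _ _ e).

Lemma tau_is_linear n : linear (@tau R O n).
Proof. by move=> a x y; rewrite tau_lin. Qed.

HB.instance Definition _ n :=
  GRing.isLinear.Build R (op O n) (op O n) _ (@tau R O n) (tau_is_linear n).

Definition cyc_defect {n} (x : op O n) : op O n := tau O x - (-1) ^+ n *: x.

Lemma cyc_defect_is_linear n : linear (@cyc_defect n).
Proof.
move=> a x y; rewrite /cyc_defect linearP scalerDr scalerA mulrC -scalerA.
by rewrite scalerBr addrACA opprD.
Qed.

HB.instance Definition _ n :=
  GRing.isLinear.Build R (op O n) (op O n) _ (@cyc_defect n) (cyc_defect_is_linear n).

Lemma castOZ a b (e : a = b) c (x : op O a) : cast e (c *: x) = c *: cast e x.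
Proof. by case: b / e. Qed.

Lemma castO0 a b (e : a = b) : cast e 0 = 0.
Proof. by case: b / e. Qed.

Lemma castOD a b (e : a = b) (x y : op O a) : cast e (x + y) = cast e x + cast e y.
Proof. by case: b / e. Qed.

Lemma castOB a b (e : a = b) (x y : op O a) : cast e (x - y) = cast e x - cast e y.
Proof. by case: b / e. Qed.

Lemma castO_sum a b (e : a = b) (r : seq nat) (F : nat -> op O a) :
  cast e (\sum_(i <- r) F i) = \sum_(i <- r) cast e (F i).
Proof. by case: b / e. Qed.

Lemma castO_id a (e : a = a) (x : op O a) : cast e x = x.
Proof. by rewrite (eq_irrelevance e erefl). Qed.

Lemma castO_trans a b c (e1 : a = b) (e2 : b = c) (x : op O a) :
  cast e2 (cast e1 x) = cast (etrans e1 e2) x.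
Proof. by case: c / e2; case: b / e1. Qed.

Lemma compl0 m n i (g : op O n) : comp O i (0 : op O m) g = 0.
Proof. by move: (comp_linl i (-1) (0 : op O m) 0 g); rewrite !scaleN1r !addNr. Qed.

Lemma compr0 m n i (f : op O m) : comp O i f (0 : op O n) = 0.
Proof. by move: (comp_linr i (-1) f (0 : op O n) 0); rewrite !scaleN1r !addNr. Qed.

Lemma complZ m n i c (f : op O m) (g : op O n) :
  comp O i (c *: f) g = c *: comp O i f g.
Proof. by rewrite -[c *: f]addr0 comp_linl compl0 addr0. Qed.

Lemma comprZ m n i c (f : op O m) (g : op O n) :
  comp O i f (c *: g) = c *: comp O i f g.
Proof. by rewrite -[c *: g]addr0 comp_linr compr0 addr0. Qed.

Lemma is_cyclicP n (x : op O n) : is_cyclic x <-> cyc_defect x = 0.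
Proof. by rewrite /is_cyclic /cyc_defect; split=> [-> | /subr0_eq]; rewrite ?subrr. Qed.

Lemma cyc_defect_castO a b (e : a = b) (x : op O a) :
  cyc_defect (cast e x) = cast e (cyc_defect x).
Proof. by case: b / e. Qed.

Lemma tau_cyclic_involutive n (f : op O n) : is_cyclic f -> tau O (tau O f) = f.
Proof. by move=> cf; rewrite cf linearZ /= cf scalerA -expr2 sqrr_sign scale1r. Qed.

Lemma tau_comp_cyclic m n i (f : op O m) (g : op O n) : is_cyclic f ->
  (0 < i < m)%N -> tau O (comp O i.+1 f g) = (-1) ^+ m *: comp O i f g.
Proof.
move=> cf /andP[i_gt0 lt_im].
rewrite tau_compi ?(leq_ltn_trans i_gt0 lt_im) ?ltnS ?i_gt0 //.
by rewrite (subn1 i.+1) cf complZ.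
Qed.

Lemma tau_comp1_cyclic m n (f : op O m) (g : op O n) :
  is_cyclic f -> is_cyclic g -> (0 < m)%N -> (0 < n)%N ->
  tau O (comp O 1 f g) = (-1) ^+ (m + n) *: cast (arity_swap m n) (comp O n g f).
Proof.
move=> cf cg m_gt0 n_gt0.
rewrite (tau_comp1 _ _ (arity_swap m n)) // cf cg complZ comprZ !castOZ.
by rewrite scalerA mulrC -exprD.
Qed.

Lemma iter_tau_period n k (x : op O n) : k = n.+1 -> iter k (fun y => tau O y) x = x.
Proof. by move=> ->; apply: tau_period. Qed.

Lemma iter_tau_comp m n k i (f : op O m) (g : op O n) : (k < i <= m)%N ->
  iter k (fun x => tau O x) (comp O i f g) = comp O (i - k) (iter k (fun x => tau O x) f) g.
Proof.
elim: k => [|k IHk] /andP[lt_ki le_im]; first by rewrite subn0.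
rewrite iterS IHk ?(ltnW lt_ki) ?le_im // tau_compi; last 2 first; try lia.
by rewrite -subnDA addn1.
Qed.

(* Rotating [f o_m g] [m - 1] times brings the arity-0 input [g] to the first slot;
   since [f o_m g] has arity [m - 1], one more rotation is the identity. *)
Lemma tau_comp1_arity0 m (f : op O m) (g : op O 0) : (0 < m)%N ->
  tau O (comp O 1 f g) = comp O m (iter 2 (fun x => tau O x) f) g.
Proof.
case: m f => // m f _.
have -> : comp O 1 f g = iter m (fun x => tau O x) (comp O m.+1 (iter 2 (fun x => tau O x) f) g).
  by rewrite iter_tau_comp ?leqnn ?andbT // -iterD addn2 (tau_period f) subSnn.
by apply: (@iter_tau_period _ m.+1); rewrite addn0 subn1.
Qed.

(* [tau] shifts the interior terms of the sum with exactly the sign of a cyclic cochain. *)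
Lemma cyc_defect_sum_comp m n (f : op O m.+1) (g : op O n) : is_cyclic f ->
  cyc_defect (\sum_(1 <= i < m.+2) sgn2 R n i *: comp O i f g)
  = tau O (comp O 1 f g) - (sgn2 R n m.+1 * (-1) ^+ (m + n)) *: comp O m.+1 f g.
Proof.
move=> cf.
have sign_shift i : sgn2 R n i.+2 * (-1) ^+ m.+1 = (-1) ^+ (m + n) * sgn2 R n i.+1.
  by sign_parity.
have tau_sum : tau O (\sum_(1 <= i < m.+2) sgn2 R n i *: comp O i f g) =
    tau O (comp O 1 f g) + (-1) ^+ (m + n) *: \sum_(1 <= i < m.+1) sgn2 R n i *: comp O i f g.
  rewrite big_nat_recl // linearD linearZ /= linear_sum scaler_sumr.
  have -> : sgn2 R n 1 = 1 by rewrite sgn2E exprM sqrr_sign.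
  rewrite scale1r; congr (_ + _); apply: eq_big_nat => i /andP[i_gt0 lt_im].
  case: i i_gt0 lt_im => // i _ lt_im.
  by rewrite linearZ /= tau_comp_cyclic // scalerA sign_shift -scalerA.
have sign : (-1) ^+ (m.+1 + n - 1) = (-1) ^+ (m + n) :> R by rewrite addSn subn1.
rewrite /cyc_defect tau_sum sign (big_nat_recr m.+1) //= scalerDr opprD addrA addrK.
by rewrite scalerA mulrC.
Qed.

Lemma bcirc_arity0l n (f : op O 0) (g : op O n) : bcirc f g = 0.
Proof. by rewrite /bcirc big_geq // scaler0. Qed.

Lemma bcirc_arity0_cyclic {m} (f : op O m) (g : op O 0) : is_cyclic f -> is_cyclic (bcirc f g).
Proof.
case: m f => [|m] f cf; apply/is_cyclicP; first by rewrite bcirc_arity0l linear0.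
rewrite /bcirc linearZ /= cyc_defect_sum_comp // tau_comp1_arity0 //=.
have -> : sgn2 R 0 m.+1 * (-1) ^+ (m + 0) = (-1) ^+ 0 by sign_parity.
by rewrite tau_cyclic_involutive // expr0 scale1r subrr scaler0.
Qed.

Lemma cyc_defect_bcirc m n (f : op O m.+1) (g : op O n.+1) : is_cyclic f -> is_cyclic g ->
  cyc_defect (bcirc f g) = (-1) ^+ (m + n) *:
    (comp O m.+1 f g + sgn2 R m.+1 n.+1 *: cast (arity_swap m.+1 n.+1) (comp O n.+1 g f)).
Proof.
move=> cf cg; rewrite /bcirc linearZ /= cyc_defect_sum_comp // tau_comp1_cyclic //.
rewrite [(m + n.+1)%N]addnS exprS mulN1r !mulrN scaleNr opprK !scalerDr !scalerA addrC.
by congr (_ *: _ + _ *: _); sign_parity.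
Qed.

Lemma bracket_cyclic {m n} (f : op O m) (g : op O n) :
  is_cyclic f -> is_cyclic g -> is_cyclic (bracket f g).
Proof.
move=> cf cg; apply/is_cyclicP.
rewrite /bracket linearB [X in _ - X]linearZ /= cyc_defect_castO.
case: m f cf => [|m] f cf.
  have /is_cyclicP -> := bcirc_arity0_cyclic g f cg.
  by rewrite bcirc_arity0l linear0 castO0 scaler0 subrr.
case: n g cg => [|n] g cg.
  by rewrite bcirc_arity0l linear0 castO0 scaler0 subr0; apply/is_cyclicP/bcirc_arity0_cyclic.
rewrite !cyc_defect_bcirc // castOZ castOD castOZ castO_trans castO_id sgn2C [(n + m)%N]addnC.
set k := (-1) ^+ (m + n); set s := sgn2 R n.+1 m.+1.
set A := comp O m.+1 f g; set B := cast _ (comp O n.+1 g f).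
have s_sq : s * s = 1 by rewrite /s sgn2E -expr2 sqrr_sign.
rewrite scalerA mulrC -scalerA [s *: (B + _)]scalerDr scalerA s_sq scale1r.
by rewrite [s *: B + A]addrC subrr.
Qed.

Lemma dO_bracket n (f : op O n) : dO f = cast (arity_d n) ((-1) ^+ n *: bracket f (mu O)).
Proof.
rewrite /dO /bracket /bcirc castOZ castOB !castOZ castO_trans castO_id castO_sum.
rewrite (big_nat_recr 2) //= big_nat1 scalerBr.
set A := comp O 1 (mu O) f; set B := comp O 2 (mu O) f.
set S := \sum_(1 <= i < n.+1) _.
have -> : (-1) ^+ n *: (sgn2 R n 2 *:
    \sum_(1 <= i < n.+1) cast (arity_d n) (sgn2 R 2 i *: comp O i f (mu O))) = S.
  rewrite !scaler_sumr; apply: eq_bigr => i _.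
  by rewrite castOZ !scalerA; congr (_ *: _); sign_parity.
rewrite !scalerDr !scalerA.
have -> : (-1) ^+ n * sgn2 R n 2 * sgn2 R 2 n * sgn2 R n 1 = (-1) ^+ n by sign_parity.
have -> : (-1) ^+ n * sgn2 R n 2 * sgn2 R 2 n * sgn2 R n 2 = (-1) ^+ 1 by sign_parity.
by rewrite exprS mulN1r scaleNr expr1 scaleN1r opprD opprK addrA [B + S]addrC addrAC.
Qed.

Lemma mu_cyclic : is_cyclic (mu O).
Proof. by rewrite /is_cyclic tau_mu expr2 mulrNN mulr1 scale1r. Qed.

Lemma is_cyclic_castO a b (e : a = b) (x : op O a) : is_cyclic x -> is_cyclic (cast e x).
Proof. by move/is_cyclicP=> cx; apply/is_cyclicP; rewrite cyc_defect_castO cx castO0. Qed.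

Lemma is_cyclicZ n c (x : op O n) : is_cyclic x -> is_cyclic (c *: x).
Proof. by move/is_cyclicP=> cx; apply/is_cyclicP; rewrite linearZ /= cx scaler0. Qed.

Lemma dO_cyclic n (f : op O n) : is_cyclic f -> is_cyclic (dO f).
Proof.
move=> cf; rewrite dO_bracket; apply/is_cyclic_castO/is_cyclicZ.
exact: bracket_cyclic cf mu_cyclic.
Qed.

End CyclicCochains.

Theorem theorem5p5 (R : comPzRingType) (O : CycOpMult R) :
  (forall (n : nat) (f : op O n), is_cyclic f -> is_cyclic (dO f)) /\
  (forall (m n : nat) (f : op O m) (g : op O n),
     is_cyclic f -> is_cyclic g -> is_cyclic (bracket f g)).
Proof. by split; [exact: dO_cyclic | exact: bracket_cyclic]. Qed.
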